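(* Let $f:\mathbb{R}\to\mathbb{C}$ be a Lebesgue measurable function which is not zero almost everywhere, has faster than exponential decay, i.e. $\lim_{x\to\infty}|f(x)|e^{cx}=0$ for every $c>0$, and is quasi-monotone, i.e. for every $b>0$ there exists $C=C(b)>0$ such that $|f(x+b)|<C|f(x)|$ for all $x>0$. Then $\mathcal G(f,\mathbb{R}^2)$ is linearly independent.
   Context: For $a,b\in\mathbb{R}$, $M_aT_bf(x)=e^{2\pi i a x}f(x-b)$, and $\mathcal G(f,\mathbb{R}^2)=\{M_aT_bf:a,b\in\mathbb{R}\}$. Measurable functions equal a.e. are identified; $\mathcal G(f,\mathbb{R}^2)$ is linearly independent if every finite linear combination $\sum c_{(a,b)}M_aT_bf$ over distinct pairs $(a,b)$ with coefficients not all zero is not zero almost everywhere. *)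

From HB Require Import structures.
From mathcomp Require Import all_boot all_order all_algebra.
From mathcomp Require Import all_classical all_reals all_analysis.
From mathcomp Require Import measurable_realfun.
From mathcomp Require Import complex.
Set Implicit Arguments. Unset Strict Implicit. Unset Printing Implicit Defensive.
Import Order.TTheory GRing.Theory Num.Theory.
Local Open Scope ring_scope.
Local Open Scope complex_scope.
Local Open Scope classical_set_scope.

Definition cabs (R : realType) (z : R[i]) : R := Normc.normc z.

Definition cexpi (R : realType) (t : R) : R[i] := (cos t) +i* (sin t).

Definition MT (R : realType) (a b : R) (f : R -> R[i]) : R -> R[i] :=
  fun x => cexpi (2 * pi * a * x) * f (x - b).

(* Lebesgue measurability of a complex valued function on R: the real and
   imaginary parts are Lebesgue measurable, i.e. preimages of Borel sets lie
   in the completed Lebesgue sigma-algebra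
   {B u N | B Borel, N Lebesgue-negligible} (completed_algebra_gen). *)
Definition Lmeasurable_fun (R : realType) (g : R -> R) : Prop :=
  forall B : set R, measurable B ->
    completed_algebra_gen (@lebesgue_measure R) (g @^-1` B).

Definition cmeasurable (R : realType) (f : R -> R[i]) : Prop :=
  Lmeasurable_fun (fun x => complex.Re (f x)) /\
  Lmeasurable_fun (fun x => complex.Im (f x)).

Definition ae_zero (R : realType) (g : R -> R[i]) : Prop :=
  {ae (@lebesgue_measure R), forall x, g x = 0}.

(* G(f, R^2) is linearly independent: every finite linear combination over
   distinct pairs (a_k, b_k) with not all coefficients zero is not a.e. zero *)
Definition gabor_lin_indep (R : realType) (f : R -> R[i]) : Prop :=
  forall (n : nat) (a b : 'I_n -> R) (c : 'I_n -> R[i]),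
    injective (fun k => (a k, b k)) ->
    (exists k, c k != 0) ->
    ~ ae_zero (fun x => \sum_(k < n) c k * MT (a k) (b k) f x).

From HB Require Import structures.
From mathcomp Require Import all_boot all_order all_algebra.
From mathcomp Require Import all_classical all_reals all_analysis.
From mathcomp Require Import measurable_realfun complex ring lra.
Set Implicit Arguments. Unset Strict Implicit. Unset Printing Implicit Defensive.
Import Order.TTheory GRing.Theory Num.Theory.
Local Open Scope ring_scope.
Local Open Scope classical_set_scope.

(* Suppose g = \sum_k c_k M_{a_k} T_{b_k} f vanishes a.e. and let B be the
   largest b_k with c_k <> 0.  Then g (y + B) = Q (y + B) f y + (terms in
   f (y + B - b_k) with b_k < B), where Q is an exponential sum with distinct
   frequencies.  For a small step h, Q cannot be small at n consecutive points
   z, z + h, ..., z + (n-1) h, while quasi-monotonicity bounds the remaining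
   terms by K |f (y + s)| for the finitely many shifts s = h, ..., n h.  On an
   arithmetic progression of step h where g vanishes this gives
   del |f y| <= K |f (y + s)| for some such s, so |f x| e^{c x} does not
   decrease along a sequence tending to +oo once e^{c h} >= K / del,
   contradicting the faster than exponential decay of f. *)

Section lebesgue_translation.
Variable R : realType.
Notation T := (measurableTypeR R).

Let shift_measurable (t : R) : measurable_fun [set: T] (fun x => x + t).
Proof. exact: measurable_funD. Qed.

Lemma lebesgue_measure_shift (t : R) (A : set T) : measurable A ->
  lebesgue_measure ((fun x => x + t) @^-1` A) = lebesgue_measure A.
Proof.
(* Uniqueness of Lebesgue measure, applied to its image under translation. *)
move=> mA; apply/esym; apply: (@lebesgue_measure_unique R
  (@measure_function_pushforward__canonical__measure_function_Measure
     _ _ T T R lebesgue_measure _ (shift_measurable t))) mA.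
move=> _ [[u v] _ <-]; rewrite /= /pushforward.
have -> : (fun x => x + t) @^-1` `]u, v]%classic = `](u - t), (v - t)]%classic.
  by apply/seteqP; split => x /=; rewrite !in_itv /= ltrBlDr lerBrDr.
rewrite !lebesgue_measure_itv /= !lte_fin ltrD2r.
by case: ifP => // _; rewrite -!EFinD opprB addrA subrK.
Qed.

Lemma ae_shift (P : R -> Prop) (t : R) :
  {ae lebesgue_measure, forall x, P x} ->
  {ae lebesgue_measure, forall x, P (x + t)}.
Proof.
move=> [A [mA A0 PA]]; exists ((fun x => x + t) @^-1` A); split.
- by rewrite -[X in measurable X]setTI; exact: shift_measurable.
- by rewrite lebesgue_measure_shift.
- by move=> x /= Px; apply: PA.
Qed.

Lemma ae_exists_gt0 (P : R -> Prop) :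
  {ae lebesgue_measure, forall x, P x} -> exists2 x, 0 < x & P x.
Proof.
move=> [A [mA A0 PA]]; apply: contrapT => noP.
have sub : `]0, 1[%classic `<=` A.
  move=> x; rewrite /= in_itv /= => /andP[x0 _]; apply: PA => /= Px.
  by apply: noP; exists x.
have := le_measure lebesgue_measure _ _ sub.
rewrite !inE => /(_ (measurable_itv _) mA) /le_trans itv_le.
have A_le0 : (lebesgue_measure A <= 0)%E by rewrite A0.
move: (itv_le _ A_le0).
have := @lebesgue_measure_itv R `]0, 1[%R.
by rewrite /= lte_fin ltr01 -EFinD subr0 => ->; rewrite lee_fin ler10.
Qed.

Lemma ae_progression (P : R -> Prop) (h t : R) :
  {ae lebesgue_measure, forall x, P x} ->
  exists2 y, 0 < y & forall m : nat, P (y + m%:R * h + t).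
Proof.
move=> aeP; have /ae_exists_gt0[y y0 Py] := ae_foralln
  (fun m : nat => ae_shift (m%:R * h + t) aeP).
by exists y => // m; rewrite -addrA.
Qed.

End lebesgue_translation.

Section modulus.
Variable R : realType.
Implicit Types (z w : R[i]) (u v : R).

Lemma cabs_ge0 z : 0 <= cabs z.
Proof. by case: z => x y; rewrite /cabs sqrtr_ge0. Qed.

Lemma cabs_gt0 z : z != 0 -> 0 < cabs z.
Proof.
move=> z0; rewrite lt_neqAle cabs_ge0 andbT eq_sym.
by apply: contra z0 => /eqP/Normc.eq0_normc ->.
Qed.

Lemma cabs0 : cabs (0 : R[i]) = 0.
Proof. exact: Normc.normc0. Qed.

Lemma cabsN z : cabs (- z) = cabs z.
Proof. exact: normcN. Qed.

Lemma cabsM z w : cabs (z * w) = cabs z * cabs w.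
Proof. exact: Normc.normcM. Qed.

Lemma cabsB z w : cabs (z - w) <= cabs z + cabs w.
Proof. by rewrite -(cabsN w); exact: le_normcD. Qed.

Lemma cabs_sum (I : Type) (r : seq I) (P : pred I) (F : I -> R[i]) :
  cabs (\sum_(i <- r | P i) F i) <= \sum_(i <- r | P i) cabs (F i).
Proof.
elim/big_rec2: _ => [|i s1 s2 _ IH]; first by rewrite cabs0.
by rewrite (le_trans (le_normcD _ _)) // lerD2l.
Qed.

Lemma cabs_cexpi u : cabs (cexpi u) = 1.
Proof. by rewrite /cabs /cexpi /= cos2Dsin2 sqrtr1. Qed.

Lemma cexpiD u v : cexpi (u + v) = cexpi u * cexpi v.
Proof.
rewrite /cexpi cosD sinD; apply/eqP; rewrite eq_complex /=.
by rewrite !eqxx /= [sin u * cos v]mulrC addrC.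
Qed.

Lemma cexpi_inj u v : `|u - v| < pi -> cexpi u = cexpi v -> u = v.
Proof.
move=> uv_lt_pi [cos_uv sin_uv]; apply/eqP; rewrite -subr_eq0.
have sin0 : sin (u - v) = 0 by rewrite sinB cos_uv sin_uv mulrC subrr.
apply: contraLR isT => uv_neq0.
have [uv_lt0|uv_ge0] := ltrP (u - v) 0.
- have : 0 < sin (- (u - v)).
    by apply: sin_gt0_pi; rewrite oppr_gt0 uv_lt0 -(ltr0_norm uv_lt0).
  by rewrite sinN sin0 oppr0 ltxx.
- have : 0 < sin (u - v).
    by apply: sin_gt0_pi; rewrite lt_neqAle eq_sym uv_neq0 uv_ge0 -(ger0_norm uv_ge0).
  by rewrite sin0 ltxx.
Qed.

End modulus.

Section exponential_sums.
Variables (R : realType) (n : nat) (om : 'I_n -> R) (h : R).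

Definition expsum (w : 'I_n -> R[i]) (y : R) : R[i] :=
  \sum_(k < n) w k * cexpi (om k * y).

Definition distinct_phases (w : 'I_n -> R[i]) : Prop :=
  forall k l, w k != 0 -> w l != 0 -> k != l ->
    cexpi (om k * h) != cexpi (om l * h).

Lemma expsum_difference (w : 'I_n -> R[i]) k0 y :
  expsum (fun k => w k * (cexpi (om k * h) - cexpi (om k0 * h))) y =
  expsum w (y + h) - cexpi (om k0 * h) * expsum w y.
Proof.
rewrite /expsum mulr_sumr -sumrB; apply: eq_bigr => k _.
by rewrite [om k * (y + h)]mulrDr cexpiD; ring.
Qed.

(* Induction on the support: by [expsum_difference], the coefficients
   w k (e^{i om_k h} - e^{i om_k0 h}) kill the frequency om_k0 and keep the
   others nonzero, so if [expsum w] were small at both z + j h and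
   z + j.+1 h, the shorter sum would be small at z + j h. *)
Lemma expsum_lower_bound_card m (w : 'I_n -> R[i]) :
  #|[pred k | w k != 0]| = m.+1 -> distinct_phases w ->
  exists2 del : R, 0 < del &
    forall z, exists2 j : nat, (j <= m)%N & del <= cabs (expsum w (z + j%:R * h)).
Proof.
elim: m w => [|m IH] w card_w dist_w.
  have [k0 supp_k0] := mem_card1 card_w.
  have wk0 : w k0 != 0 by have := supp_k0 k0; rewrite !inE eqxx.
  exists (cabs (w k0)); first exact: cabs_gt0.
  move=> z; exists 0%N => //; rewrite /expsum (bigD1 k0) //= big1 ?addr0.
    by rewrite cabsM cabs_cexpi mulr1.
  move=> k /negbTE k_neq; have := supp_k0 k; rewrite !inE k_neq.
  by move/negbT; rewrite negbK => /eqP ->; rewrite mul0r.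
have [k0 wk0] : exists k0, w k0 != 0.
  have /card_gt0P[k0 wk0] : (0 < #|[pred k | w k != 0%R]|)%N by rewrite card_w.
  by exists k0.
pose w' k := w k * (cexpi (om k * h) - cexpi (om k0 * h)).
have supp_w' k : (w' k != 0) = (w k != 0) && (k != k0).
  rewrite /w' mulf_eq0 negb_or subr_eq0.
  have [->|k_neq] := eqVneq k k0; first by rewrite eqxx andbF.
  by rewrite andbT; case: (boolP (w k != 0)) => //= wk; exact: dist_w.
have card_w' : #|[pred k | w' k != 0]| = m.+1.
  move: card_w; rewrite (cardD1 k0) inE wk0 add1n => -[<-].
  by apply: eq_card => k; rewrite !inE supp_w' andbC.
have dist_w' : distinct_phases w'.
  by move=> k l; rewrite !supp_w' => /andP[wk _] /andP[wl _]; exact: dist_w.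
have [del' del'_gt0 lb'] := IH w' card_w' dist_w'.
exists (del' / 2) => [|z]; first by lra.
have [j jm] := lb' z; rewrite expsum_difference.
move/le_trans/(_ (cabsB _ _)); rewrite cabsM cabs_cexpi mul1r => lbj.
have [lb_next|lt_next] := lerP (del' / 2) (cabs (expsum w (z + j%:R * h + h))).
  by exists j.+1 => //; rewrite -[j.+1]addn1 natrD mulrDl mul1r addrA.
by exists j; [exact: leqW | lra].
Qed.

Lemma expsum_lower_bound (w : 'I_n -> R[i]) :
  (exists k, w k != 0) -> distinct_phases w ->
  exists2 del : R, 0 < del &
    forall z, exists2 j : nat, (j < n)%N & del <= cabs (expsum w (z + j%:R * h)).
Proof.
move=> [k0 wk0] dist_w.
have : (0 < #|[pred k | w k != 0%R]|)%N by apply/card_gt0P; exists k0.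
case card_w: #|[pred k | w k != 0]| => [//|m] _.
have [del del_gt0 lb] := expsum_lower_bound_card card_w dist_w.
exists del => // z; have [j jm lbj] := lb z; exists j => //.
by apply: leq_ltn_trans jm _; rewrite -card_w -[X in (_ <= X)%N]card_ord max_card.
Qed.

End exponential_sums.

Section quasi_monotone.
Variables (R : realType) (f : R -> R[i]).

Definition quasi_monotone : Prop :=
  forall b, 0 < b -> exists C, 0 < C /\
    forall x, 0 < x -> cabs (f (x + b)) < C * cabs (f x).

Hypothesis f_qm : quasi_monotone.

Lemma quasi_monotone_neq0 x : 0 < x -> f x != 0.
Proof.
move=> x_gt0; have [C [_ qm1]] := f_qm ltr01.
by apply: contraTneq (qm1 x x_gt0) => ->; rewrite cabs0 mulr0 -leNgt cabs_ge0.
Qed.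

Lemma quasi_monotone_uniform (I : finType) (P : pred I) (beta : I -> R) :
  (forall i, P i -> 0 < beta i) ->
  exists2 C, 0 < C &
    forall i x, P i -> 0 < x -> cabs (f (x + beta i)) <= C * cabs (f x).
Proof.
move=> beta_gt0.
have qm_i i : exists C, 0 < C /\
    (P i -> forall x, 0 < x -> cabs (f (x + beta i)) <= C * cabs (f x)).
  have [Pi|_] := boolP (P i); last by exists 1.
  have [C [C_gt0 qmC]] := f_qm (beta_gt0 i Pi).
  by exists C; split => // _ x x_gt0; exact/ltW/qmC.
have [Cs /all_and2[Cs_gt0 qmCs]] := choice qm_i.
exists (1 + \sum_i Cs i) => [|i x Pi x_gt0].
  by rewrite ltr_pwDl // sumr_ge0 // => i _; exact/ltW.
apply: (le_trans (qmCs i Pi x x_gt0)); rewrite ler_wpM2r ?cabs_ge0 //.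
rewrite (bigD1 i) //= addrCA lerDl addr_ge0 // sumr_ge0 // => j _.
exact/ltW.
Qed.

End quasi_monotone.

Lemma near0_mul_lt (R : realType) (q r : R) :
  0 < r -> \forall h \near 0^'+, q * h < r.
Proof.
move=> r_gt0; near=> h.
have h_gt0 : 0 < h by near: h; exact: nbhs_right_gt.
have : h < r / (`|q| + 1) by near: h; apply: nbhs_right_lt; rewrite divr_gt0.
rewrite ltr_pdivlMr ?ltr_pwDr // => lt_r.
apply: le_lt_trans lt_r; rewrite mulrC ler_pM2l //.
by rewrite (le_trans (ler_norm q)) // lerDl.
Unshelve. all: by end_near.
Qed.

Lemma exists_expR_ge (R : realType) (M h : R) :
  0 < h -> exists2 c, 0 < c & forall s, h <= s -> M <= expR (c * s).
Proof.
move=> h_gt0; exists ((1 + `|M|) / h) => [|s hs]; first by rewrite divr_gt0.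
have cs_ge : 1 + `|M| <= (1 + `|M|) / h * s.
  by rewrite mulrAC ler_pdivlMr // ler_pM2l // ltr_pwDl.
apply: le_trans (expR_ge1Dx _); apply: ler_wpDl => //.
by rewrite (le_trans (ler_norm M)) // (le_trans _ cs_ge) // lerDr.
Qed.

Lemma increasing_chain_not_cvg0 (R : realType) (phi : R -> R) (P : R -> Prop)
    (h x0 : R) :
  0 < h -> P x0 -> 0 < phi x0 ->
  (forall x, P x -> exists2 s, h <= s & P (x + s) /\ phi x <= phi (x + s)) ->
  ~ (phi @ +oo --> 0).
Proof.
move=> h_gt0 Px0 phix0_gt0 step.
have chain (N : nat) : exists x, [/\ P x, x0 + N%:R * h <= x & phi x0 <= phi x].
  elim: N => [|N [x [Px x_ge phi_ge]]]; first by exists x0; rewrite mul0r addr0.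
  have [s hs [Pxs phi_le]] := step x Px.
  exists (x + s); split => //; last exact: le_trans phi_le.
  by rewrite -natr1 mulrDl mul1r addrA lerD.
move/cvgrPdist_lt/(_ _ phix0_gt0) => [M [_ near_M]].
have [N M_lt] : exists N : nat, M < x0 + N%:R * h.
  exists (Num.Def.archi_bound (`|M - x0| / h)).
  have := archi_boundP (divr_ge0 (normr_ge0 (M - x0)) (ltW h_gt0)).
  rewrite ltr_pdivrMr // => lt_N; have := ler_norm (M - x0); lra.
have [x [_ x_ge phi_ge]] := chain N.
have := near_M x (lt_le_trans M_lt x_ge); rewrite sub0r normrN.
by apply/negP; rewrite -leNgt (le_trans phi_ge) // ler_norm.
Qed.

Section gabor_combination.
Variables (R : realType) (f : R -> R[i]).
Hypothesis f_qm : quasi_monotone f.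
Variables (n : nat) (a b : 'I_n -> R) (c : 'I_n -> R[i]).
Hypothesis ab_inj : injective (fun k => (a k, b k)).
Variable kB : 'I_n.
Hypothesis c_kB : c kB != 0.
Hypothesis b_kB_max : forall k, c k != 0 -> b k <= b kB.

Let g x := \sum_(k < n) c k * MT (a k) (b k) f x.
Let B := b kB.
Let w k := if b k == B then c k else 0.
Let om k := 2 * pi * a k.

Lemma exists_small_step : exists2 h : R, 0 < h &
  (forall k, c k != 0 -> b k < B -> n%:R * h < B - b k) /\
  (forall k l, `|a k - a l| * h < 2^-1).
Proof.
have gap_near : \forall h \near 0^'+,
    forall k, c k != 0 -> b k < B -> n%:R * h < B - b k.
  apply: (@filter_forall _ _ (fun k h => c k != 0 -> b k < B -> n%:R * h < B - b k)).
  move=> k; case: (ltrP (b k) B) => [bk_lt|_]; last exact: filterE.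
  by near=> h => _ _; near: h; apply: near0_mul_lt; rewrite subr_gt0.
have freq_near : \forall h \near 0^'+,
    forall kl : 'I_n * 'I_n, `|a kl.1 - a kl.2| * h < 2^-1.
  apply: (@filter_forall _ _ (fun kl h => `|a kl.1 - a kl.2| * h < 2^-1)) => kl.
  exact: near0_mul_lt.
have : \forall h \near 0^'+, [/\ 0 < h,
    forall k, c k != 0 -> b k < B -> n%:R * h < B - b k &
    forall kl : 'I_n * 'I_n, `|a kl.1 - a kl.2| * h < 2^-1].
  by near=> h; split; near: h => //; exact: nbhs_right_gt.
move=> /filter_ex[h [h_gt0 gap freq]].
by exists h => //; split => // k l; exact: (freq (k, l)).
Unshelve. all: by end_near.
Qed.

Variable h : R.
Hypothesis h_gt0 : 0 < h.
Hypothesis h_gap : forall k, c k != 0 -> b k < B -> n%:R * h < B - b k.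
Hypothesis h_freq : forall k l, `|a k - a l| * h < 2^-1.

Lemma distinct_phases_top : distinct_phases om h w.
Proof.
move=> k l; rewrite /w.
case: (eqVneq (b k) B) => [bk|_]; last by rewrite eqxx.
case: (eqVneq (b l) B) => [bl|_]; last by rewrite eqxx.
move=> _ _; apply: contra => /eqP eq_phase; apply/eqP/ab_inj => /=.
rewrite bk bl; congr (_, _).
have : om k * h = om l * h.
  apply: cexpi_inj eq_phase.
  have -> : om k * h - om l * h = pi * (2 * ((a k - a l) * h)) by rewrite /om; ring.
  rewrite normrM (gtr0_norm (pi_gt0 R)) -[ltRHS]mulr1 ltr_pM2l ?pi_gt0 //.
  rewrite normrM ger0_norm // normrM (gtr0_norm h_gt0).
  by have := h_freq k l; lra.
have two_pi_neq0 : 2 * pi != 0 :> R by rewrite mulf_neq0 ?lt0r_neq0 ?pi_gt0.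
by move/(mulIf (lt0r_neq0 h_gt0))/(mulfI two_pi_neq0).
Qed.

Lemma combination_split y :
  g (y + B) = expsum om w (y + B) * f y +
    \sum_(k < n | b k != B) c k * MT (a k) (b k) f (y + B).
Proof.
rewrite /g (bigID (fun k => b k == B)) /=; congr (_ + _).
rewrite /expsum mulr_suml big_mkcond /=; apply: eq_bigr => k _.
by rewrite /w /MT; case: eqP => [->|_]; rewrite ?addrK ?mulrA ?mul0r.
Qed.

Lemma combination_domination : exists K : R, forall y j, 0 < y -> (j < n)%N ->
  g (y + B) = 0 ->
  cabs (expsum om w (y + B)) * cabs (f y) <= K * cabs (f (y + j.+1%:R * h)).
Proof.
pose P (kj : 'I_n * 'I_n) := (c kj.1 != 0) && (b kj.1 < B).
pose beta (kj : 'I_n * 'I_n) := B - b kj.1 - kj.2.+1%:R * h.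
have beta_gt0 kj : P kj -> 0 < beta kj.
  case: kj => k j /andP[ck bk]; rewrite /beta subr_gt0 /=.
  by apply: le_lt_trans (h_gap ck bk); rewrite ler_pM2r // ler_nat.
(* |f (y + B - b_k)| = |f ((y + s) + beta)| with beta = B - b_k - s > 0. *)
have [C C_gt0 qmC] := quasi_monotone_uniform f_qm beta_gt0.
exists (C * \sum_k cabs (c k)) => y j y_gt0 jn g0.
set s := j.+1%:R * h; set F := cabs (f (y + s)).
have ys_gt0 : 0 < y + s by rewrite addr_gt0 // mulr_gt0.
rewrite -cabsM; have -> : expsum om w (y + B) * f y =
    - \sum_(k < n | b k != B) c k * MT (a k) (b k) f (y + B).
  by apply/eqP; rewrite -addr_eq0 -combination_split g0.
rewrite cabsN (le_trans (cabs_sum _ _ _)) //.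
rewrite mulrAC mulr_sumr [X in _ <= X](bigID (fun k => b k != B)) /=.
rewrite -[X in X <= _]addr0 lerD //; last first.
  by apply: sumr_ge0 => k _; rewrite !mulr_ge0 ?cabs_ge0 ?ltW.
apply: ler_sum => k bk_neq; rewrite /MT cabsM cabsM cabs_cexpi mul1r.
have [->|ck] := eqVneq (c k) 0; first by rewrite cabs0 !mul0r mulr0.
have bk_lt : b k < B by rewrite lt_neqAle bk_neq b_kB_max.
have := qmC (k, Ordinal jn) (y + s); rewrite /P /beta /= ck bk_lt.
have -> : y + s + (B - b k - s) = y + B - b k by ring.
by move=> /(_ isT ys_gt0) bound; rewrite mulrC ler_pM2r ?cabs_gt0.
Qed.

Variable y0 : R.
Hypothesis y0_gt0 : 0 < y0.
Hypothesis g_progression : forall m : nat, g (y0 + m%:R * h + B) = 0.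

Lemma combination_not_rapid_decay : exists2 c0 : R, 0 < c0 &
  ~ ((fun x => cabs (f x) * expR (c0 * x)) @ +oo --> 0).
Proof.
have w_kB : exists k, w k != 0 by exists kB; rewrite /w eqxx.
have [del del_gt0 lb] := expsum_lower_bound w_kB distinct_phases_top.
have [K dom] := combination_domination.
have [c0 c0_gt0 expR_ge] := exists_expR_ge (K / del) h_gt0.
exists c0 => //.
pose P x := (exists m : nat, x = y0 + m%:R * h) /\
  del <= cabs (expsum om w (x + B)).
have next (m : nat) : exists2 j : nat, (j < n)%N & P (y0 + m%:R * h + j.+1%:R * h).
  have [j jn lbj] := lb (y0 + m%:R * h + h + B).
  exists j => //; split; first by exists (m + j.+1)%N; rewrite natrD mulrDl addrA.
  move: lbj; rewrite -[j.+1]addn1 natrD mulrDl mul1r.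
  by congr (_ <= cabs (expsum _ _ _)); ring.
have [j1 _ P1] := next 0%N.
apply: (increasing_chain_not_cvg0 h_gt0 P1).
  rewrite mulr_gt0 ?expR_gt0 // cabs_gt0 // (quasi_monotone_neq0 f_qm) //.
  by rewrite mul0r addr0 addr_gt0 // mulr_gt0.
move=> _ [[m ->] lb_m]; have [j jn Pj] := next m; set s := j.+1%:R * h.
have x_gt0 : 0 < y0 + m%:R * h by rewrite (lt_le_trans y0_gt0) // lerDl mulr_ge0 // ltW.
have h_le_s : h <= s by rewrite /s -[X in X <= _]mul1r ler_pM2r // ler1n.
exists s => //.
split => //; rewrite [c0 * (_ + s)]mulrDr expRD [expR (c0 * _) * _]mulrC mulrA.
rewrite ler_pM2r ?expR_gt0 // [cabs (f (_ + s)) * _]mulrC -(ler_pM2l del_gt0).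
apply: le_trans (ler_wpM2r (cabs_ge0 _) lb_m) _.
apply: le_trans (dom _ _ x_gt0 jn (g_progression m)) _.
by rewrite mulrA ler_wpM2r ?cabs_ge0 // -ler_pdivrMl // mulrC expR_ge.
Qed.

End gabor_combination.

Unset Implicit Arguments.
Theorem theorem3p4 (R : realType) (f : R -> R[i]) :
  cmeasurable f ->
  ~ ae_zero f ->
  (forall c : R, 0 < c ->
     (fun x : R => cabs (f x) * expR (c * x)) @ +oo --> 0) ->
  (forall b : R, 0 < b -> exists C : R, 0 < C /\
     forall x : R, 0 < x -> cabs (f (x + b)) < C * cabs (f x)) ->
  gabor_lin_indep f.
Proof.
move=> _ _ rapid_decay f_qm n a b c ab_inj [k1 c_k1] comb_ae0.
have [kB c_kB b_kB_max] := @arg_maxP _ _ _ k1 (fun k => c k != 0) b c_k1.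
have [h h_gt0 [h_gap h_freq]] := exists_small_step a b c kB.
have [y0 y0_gt0 comb_progression] := ae_progression h (b kB) comb_ae0.
have [c0 c0_gt0 not_decay] := combination_not_rapid_decay f_qm ab_inj c_kB
  b_kB_max h_gt0 h_gap h_freq y0_gt0 comb_progression.
exact: not_decay (rapid_decay c0 c0_gt0).
Qed.
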